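(* Let $F$ be a field, $d\ge1$, and $x:\mathbb Z^2\to F$ such that $\det M^{(d+1)}_{j,k}=1$ and $\det M^{(d)}_{j,k}\neq0$ for all $j,k\in\mathbb Z$. Then there exist functions $c_1,\dots,c_d:\mathbb Z\to F$ such that for all $j,k\in\mathbb Z$, $$0=x_{j,k-d}+\sum_{i=1}^d(-1)^i\,c_i(j+k)\,x_{j+i,k+i-d}-(-1)^d\,x_{j+d+1,k+1}.$$ That is, the coefficients of this linear recursion depend only on $j+k$ and not on $j-k$.
   Context: For $m\ge1$, $M^{(m)}_{j,k}$ denotes the $m\times m$ matrix whose $(r,c)$ entry ($0\le r,c\le m-1$) is $x_{j-r+c,\;k-(m-1)+r+c}$. *)

From HB Require Import structures.
From mathcomp Require Import all_boot all_order all_algebra.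
Set Implicit Arguments. Unset Strict Implicit. Unset Printing Implicit Defensive.
Import Order.TTheory GRing.Theory Num.Theory.
Local Open Scope ring_scope.

Definition Mmat (F : fieldType) (x : int -> int -> F) (m : nat) (j k : int)
  : 'M[F]_m :=
  \matrix_(r < m, c < m)
    x (j - (r : nat)%:Z + (c : nat)%:Z)
      (k - (m.-1)%:Z + (r : nat)%:Z + (c : nat)%:Z).

From HB Require Import structures.
From mathcomp Require Import all_boot all_order all_algebra.
From mathcomp Require Import zify.
Import Order.TTheory GRing.Theory Num.Theory.
Set Implicit Arguments. Unset Strict Implicit.
Local Open Scope ring_scope.

(* Let W(j,k) be the (d+1) x (d+2) matrix with entries x_{j-r+c, k-d+r+c}, and
   let K(j,k) be its vector of signed maximal minors, so that W(j,k) kills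
   K(j,k); the first row of this identity is the recurrence with
   coefficients K(j,k).  Deleting the first or the last column of W(j,k)
   leaves a matrix M^{(d+1)}, so the two extreme entries of K(j,k) are
   1 and (-1)^(d+1).  The windows W(j,k) and W(j+1,k-1) share d rows, which
   kill both kernel vectors; their difference vanishes at both ends, and the
   middle d x d block of the shared rows is an invertible M^{(d)}, so the
   difference is 0.  Hence K(j,k) depends only on j+k. *)

Section CrossVector.
Variables (R : comPzRingType) (n : nat).

Definition cross_mx (A : 'M[R]_(n, n.+1)) : 'cV_n.+1 :=
  \col_i ((-1) ^+ i * \det (col' i A)).

Lemma mul_cross_mx (A : 'M[R]_(n, n.+1)) : A *m cross_mx A = 0.
Proof.
apply/matrixP => r z; rewrite !mxE.
pose B := \matrix_(i < n.+1, c < n.+1)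
  (if unlift ord0 i is Some i' then A i' c else A r c).
have detB0 : \det B = 0.
  apply: (determinant_alternate (i1 := ord0) (i2 := lift ord0 r)).
    by rewrite neq_lift.
  by move=> c; rewrite !mxE liftK unlift_none.
rewrite -[RHS]detB0 (expand_det_row B ord0); apply: eq_bigr => c _.
rewrite /cofactor !mxE unlift_none add0n; congr (_ * (_ * \det _)).
by apply/matrixP => i k; rewrite !mxE liftK.
Qed.

Lemma mul_rowsub_cross_mx m (f : 'I_m -> 'I_n) (A : 'M[R]_(n, n.+1)) :
  rowsub f A *m cross_mx A = 0.
Proof.
by rewrite mul_rowsub_mx mul_cross_mx; apply/matrixP => i j; rewrite !mxE.
Qed.

End CrossVector.

Lemma kernel_vector_eq0 (F : fieldType) (n : nat) (C : 'M[F]_(n, n.+2))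
    (v : 'cV_n.+2) :
  let mid (c : 'I_n) := lift ord0 (widen_ord (leqnSn n) c) in
  colsub mid C \in unitmx -> C *m v = 0 ->
  v ord0 0 = 0 -> v ord_max 0 = 0 -> v = 0.
Proof.
move=> mid unitC Cv0 v0 vmax.
have midv0 : rowsub mid v = 0.
  have Cmid0 : colsub mid C *m rowsub mid v = 0.
    rewrite -Cv0; apply/matrixP => r z; rewrite ord1 !mxE.
    have liftmax : lift ord0 ord_max = ord_max :> 'I_n.+2 by apply: val_inj.
    rewrite big_ord_recl big_ord_recr /= liftmax v0 vmax.
    by rewrite !mulr0 add0r addr0; apply: eq_bigr => c _; rewrite !mxE.
  by rewrite -(mulKmx unitC (rowsub mid v)) Cmid0 mulmx0.
apply/matrixP => i z; rewrite ord1 mxE.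
have [->|i0] := eqVneq i ord0; first exact: v0.
have [->|imax] := eqVneq i ord_max; first exact: vmax.
have ilt : (i.-1 < n)%N.
  move: i0 imax (ltn_ord i); rewrite -!val_eqE -subn1 /=.
  by move=> /eqP ? /eqP ?; lia.
have -> : i = mid (Ordinal ilt).
  apply: val_inj; move: i0; rewrite -val_eqE /= /bump leq0n add1n -subn1.
  by move=> /eqP ?; lia.
by have := congr1 (fun M : 'cV_n => M (Ordinal ilt) 0) midv0; rewrite !mxE.
Qed.

Section Recurrence.
Variables (F : fieldType) (x : int -> int -> F).

Definition window_mx m n (j k : int) : 'M[F]_(m, n) :=
  \matrix_(r < m, c < n)
    x (j - (r : nat)%:Z + (c : nat)%:Z) (k + (r : nat)%:Z + (c : nat)%:Z).

Lemma window_Mmat m j k : window_mx m m j k = Mmat x m j (k + (m.-1)%:Z).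
Proof. by apply/matrixP => r c; rewrite !mxE; congr x; lia. Qed.

Lemma col'0_window m n j k :
  col' ord0 (window_mx m n.+1 j k) = window_mx m n (j + 1) (k + 1).
Proof. by apply/matrixP => r c; rewrite !mxE lift0; congr x; lia. Qed.

Lemma col'max_window m n j k :
  col' ord_max (window_mx m n.+1 j k) = window_mx m n j k.
Proof. by apply/matrixP => r c; rewrite !mxE lift_max. Qed.

Lemma row'0_window m n j k :
  row' ord0 (window_mx m.+1 n j k) = window_mx m n (j - 1) (k + 1).
Proof. by apply/matrixP => r c; rewrite !mxE lift0; congr x; lia. Qed.

Lemma rowsub_widen_window m n j k :
  rowsub (widen_ord (leqnSn m)) (window_mx m.+1 n j k) = window_mx m n j k.
Proof. by apply/matrixP => r c; rewrite !mxE. Qed.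

Lemma colsub_mid_window m n j k :
  colsub (fun c : 'I_n => lift ord0 (widen_ord (leqnSn n) c))
    (window_mx m n.+2 j k) = window_mx m n (j + 1) (k + 1).
Proof. by apply/matrixP => r c; rewrite !mxE lift0 /=; congr x; lia. Qed.

Variable d : nat.
Hypothesis det_Mmat1 : forall j k, \det (Mmat x d.+1 j k) = 1.
Hypothesis det_Mmat_neq0 : forall j k, \det (Mmat x d j k) != 0.

Definition window_cross j k : 'cV[F]_d.+2 :=
  cross_mx (window_mx d.+1 d.+2 j k).

Lemma window_cross_first j k : window_cross j k ord0 0 = 1.
Proof. by rewrite mxE expr0 mul1r col'0_window window_Mmat det_Mmat1. Qed.

Lemma window_cross_last j k : window_cross j k ord_max 0 = (-1) ^+ d.+1.
Proof. by rewrite mxE col'max_window window_Mmat det_Mmat1 mulr1. Qed.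

Lemma window_cross_shift1 j k :
  window_cross (j + 1) (k - 1) = window_cross j k.
Proof.
apply/eqP; rewrite -subr_eq0; apply/eqP.
apply: (kernel_vector_eq0 (C := window_mx d d.+2 j k)).
- by rewrite colsub_mid_window window_Mmat unitmxE unitfE det_Mmat_neq0.
- have shared_rows : window_mx d d.+2 j k
      = row' ord0 (window_mx d.+1 d.+2 (j + 1) (k - 1)).
    by rewrite row'0_window addrK subrK.
  rewrite mulmxBr {1}shared_rows row'Esub -(rowsub_widen_window d).
  by rewrite !mul_rowsub_cross_mx subrr.
- by rewrite mxE [X in _ + X]mxE !window_cross_first subrr.
- by rewrite mxE [X in _ + X]mxE !window_cross_last subrr.
Qed.

Lemma window_cross_shift (t j k : int) :
  window_cross (j + t) (k - t) = window_cross j k.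
Proof.
elim/int_rec: t j k => [|t IHt|t IHt] j k; first by rewrite addr0 subr0.
- by rewrite -(IHt j k) -[RHS]window_cross_shift1; congr window_cross; lia.
- by rewrite -(IHt j k) -[LHS]window_cross_shift1; congr window_cross; lia.
Qed.

End Recurrence.

Theorem mainTheorem6 (F : fieldType) (d : nat) (hd : (1 <= d)%N)
  (x : int -> int -> F)
  (hdet1 : forall j k : int, \det (Mmat x d.+1 j k) = 1)
  (hdet0 : forall j k : int, \det (Mmat x d j k) != 0) :
  exists c : nat -> int -> F,
    forall j k : int,
      0 = x j (k - d%:Z)
          + \sum_(1 <= i < d.+1) (-1) ^+ i * c i (j + k)
                                 * x (j + i%:Z) (k + i%:Z - d%:Z)
          - (-1) ^+ d * x (j + d%:Z + 1) (k + 1).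
Proof.
exists (fun i s => (-1) ^+ i * window_cross x d s (- d%:Z) (inord i) 0) => j k.
have window_cross_jk :
    window_cross x d (j + k) (- d%:Z) = window_cross x d j (k - d%:Z).
  by rewrite -[RHS](window_cross_shift hdet1 hdet0 k); congr window_cross; lia.
have := congr1 (fun v : 'cV_d.+1 => v ord0 0)
  (mul_cross_mx (window_mx x d.+1 d.+2 j (k - d%:Z))).
rewrite -/(window_cross x d j (k - d%:Z)) !mxE big_ord_recl big_ord_recr /=.
move=> row0.
have liftmax : lift ord0 ord_max = ord_max :> 'I_d.+2 by apply: val_inj.
rewrite -[LHS]row0 liftmax (window_cross_first hdet1) (window_cross_last hdet1).
rewrite window_cross_jk big_add1 big_mkord mulr1 exprS mulN1r mulrN mulrC addrA.
congr (_ + _ - _ * _).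
- by rewrite mxE /=; congr x; lia.
- apply: eq_bigr => i _; rewrite signrMK mulrC.
  have -> : inord i.+1 = lift ord0 (widen_ord (leqnSn d) i).
    by apply: val_inj; rewrite /= /bump add1n inordK // !ltnS ltnW.
  by congr (_ * _); rewrite mxE lift0 /=; congr x; lia.
- by rewrite mxE /=; congr x; lia.
Qed.
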